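(* Let $\bm v_1,\dots,\bm v_N\in\mathbb{R}^r$, $\bm X := \mathsf{Gram}(\bm v_1,\dots,\bm v_N)$, and $\bm v := (\bm v_1;\dots;\bm v_N)\in\mathbb{R}^{rN}$. Then $\bm X\in\mathscr{C}^N$ if and only if $\sum_{i=1}^N\|\bm v_i\|_2^2 = N$ and there exists $\bm M\in\mathcal{B}_{\mathrm{sep}}(N,r)$ with $\bm v^\top\bm M\bm v = N^2$.
   Context: $\mathscr{C}^N := \mathrm{conv}\{\bm x\bm x^\top : \bm x\in\{\pm1\}^N\}$. A matrix $\bm M \in \mathbb{R}^{rN\times rN}$ is viewed as an $N\times N$ array of $r\times r$ blocks, $\bm M_{[ij]}$ denoting block $(i,j)$. $\mathcal{B}(N,r)$ is the set of symmetric $\bm M \in \mathbb{R}^{rN\times rN}$ with $\bm M \succeq 0$, $\bm M_{[ii]} = \bm I_r$ for all $i$, and $\bm M_{[ij]} = \bm M_{[ij]}^\top$ for all $i,j$. A matrix $\bm\rho\in\mathbb{R}^{rN\times rN}$ with trace $1$ is separable if $\bm\rho = \sum_{k=1}^m \rho_k(\bm a_k\otimes\bm b_k)(\bm a_k\otimes\bm b_k)^\top$ for some unit vectors $\bm a_k\in\mathbb{R}^N$, unit vectors $\bm b_k\in\mathbb{R}^r$, and $\rho_k\ge0$ with $\sum_k\rho_k = 1$ (here $\bm a\otimes\bm b\in\mathbb{R}^{rN}$ has $i$-th block $a_i\bm b$). $\mathcal{B}_{\mathrm{sep}}(N,r)$ is the set of $\bm M\in\mathcal{B}(N,r)$ such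 that $\frac{1}{rN}\bm M$ is separable. *)

From HB Require Import structures.
From mathcomp Require Import all_boot all_order all_algebra.
Set Implicit Arguments. Unset Strict Implicit. Unset Printing Implicit Defensive.
Import Order.TTheory GRing.Theory Num.Theory.
Local Open Scope ring_scope.

Definition sgvec (R : rcfType) (N : nat) (s : {ffun 'I_N -> bool}) : 'rV[R]_N :=
  \row_i (if s i then 1 else -1).

(* The cut polytope  C^N = conv { x x^T : x in {+-1}^N }
   (x is a row vector here, so x x^T of the paper is x^T *m x). *)
Definition cut_polytope (R : rcfType) (N : nat) (X : 'M[R]_N) : Prop :=
  exists w : {ffun {ffun 'I_N -> bool} -> R},
    (forall s, 0 <= w s) /\ \sum_s w s = 1 /\
    X = \sum_s w s *: ((sgvec R s)^T *m sgvec R s).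

(* Block (i,j) (an r x r matrix) of an (N*r) x (N*r) matrix; the global index of
   entry p of block i is mxvec_index i p = i*r + p. *)
Definition blk (R : rcfType) (N r : nat) (M : 'M[R]_(N * r)) (i j : 'I_N) : 'M[R]_r :=
  \matrix_(p, q) M (mxvec_index i p) (mxvec_index j q).

Definition psd (R : rcfType) (n : nat) (M : 'M[R]_n) : Prop :=
  forall u : 'rV[R]_n, 0 <= (u *m M *m u^T) 0 0.

Definition Bset (R : rcfType) (N r : nat) (M : 'M[R]_(N * r)) : Prop :=
  [/\ M^T = M, psd M,
      forall i, blk M i i = 1%:M &
      forall i j, (blk M i j)^T = blk M i j].

(* a (x) b : the vector whose i-th block is a_i b. *)
Definition kronv (R : rcfType) (N r : nat) (a : 'rV[R]_N) (b : 'rV[R]_r) : 'rV[R]_(N * r) :=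
  mxvec (a^T *m b).

Definition sqnorm (R : rcfType) (n : nat) (u : 'rV[R]_n) : R := (u *m u^T) 0 0.

Definition separable (R : rcfType) (N r : nat) (rho : 'M[R]_(N * r)) : Prop :=
  \tr rho = 1 /\
  exists (m : nat) (w : 'I_m -> R) (a : 'I_m -> 'rV[R]_N) (b : 'I_m -> 'rV[R]_r),
    [/\ forall k, 0 <= w k, \sum_k w k = 1,
        forall k, sqnorm (a k) = 1, forall k, sqnorm (b k) = 1 &
        rho = \sum_k w k *: ((kronv (a k) (b k))^T *m kronv (a k) (b k))].

Definition Bsep (R : rcfType) (N r : nat) (M : 'M[R]_(N * r)) : Prop :=
  Bset M /\ separable (((N * r)%:R)^-1 *: M).

Definition gram (R : rcfType) (N r : nat) (V : 'M[R]_(N, r)) : 'M[R]_N := V *m V^T.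

(* Both directions go through Kronecker mixtures
     kron_mix w a b = sum_k w_k (a_k (x) b_k)(a_k (x) b_k)^T,   w >= 0,
   the shape of every separable matrix: kron_mix_Bsep and Bsep_kron_mix show
   that B_sep(N,r) consists of the mixtures with identity diagonal blocks.
   - Necessity (cut_polytope_Bsep): from gram V = sum_s w_s x_s^T x_s with
     sign vectors x_s and the orthogonal projection P on the row space of V,
     an explicit mixture cut_witness has identity diagonal blocks and value
     N^2.
   - Sufficiency (Bsep_mix_cut): for a mixture with identity diagonal blocks
     and value N^2, two tight inequalities (Cauchy-Schwarz, then a variance
     bound) force every a_k in the support to be a sign vector divided by
     sqrt N, which exhibits gram V as a convex combination of sign-vector
     outer products. *)

From HB Require Import structures.
From mathcomp Require Import all_boot all_order all_algebra.
From mathcomp Require Import ring.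
Set Implicit Arguments. Unset Strict Implicit. Unset Printing Implicit Defensive.
Import Order.TTheory GRing.Theory Num.Theory.
Local Open Scope ring_scope.

Section RowVectors.
Variable R : rcfType.

Definition dot n (u v : 'rV[R]_n) : R := (u *m v^T) 0 0.

Lemma dotE n (u v : 'rV[R]_n) : dot u v = \sum_j u 0 j * v 0 j.
Proof. by rewrite /dot mxE; apply: eq_bigr => j _; rewrite mxE. Qed.

Lemma dotC n (u v : 'rV[R]_n) : dot u v = dot v u.
Proof. by rewrite !dotE; apply: eq_bigr => j _; rewrite mulrC. Qed.

Lemma dot_delta n (u : 'rV[R]_n) l : dot u (delta_mx 0 l) = u 0 l.
Proof.
rewrite dotE (bigD1 l) //= big1 => [|j /negbTE jl]; last by rewrite mxE jl andbF mulr0.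
by rewrite addr0 mxE !eqxx mulr1.
Qed.

Lemma sqnormE n (u : 'rV[R]_n) : sqnorm u = \sum_j u 0 j ^+ 2.
Proof. by rewrite -[sqnorm u]/(dot u u) dotE; under eq_bigr do rewrite -expr2. Qed.

Lemma sqnorm_ge0 n (u : 'rV[R]_n) : 0 <= sqnorm u.
Proof. by rewrite sqnormE; apply: sumr_ge0 => j _; exact: sqr_ge0. Qed.

Lemma sqnorm_eq0 n (u : 'rV[R]_n) : sqnorm u = 0 -> u = 0.
Proof.
rewrite sqnormE => u0; apply/rowP => j; rewrite mxE.
have /eqP := psumr_eq0P (fun l _ => sqr_ge0 (u 0 l)) u0 isT (i := j).
by rewrite sqrf_eq0 => /eqP.
Qed.

Lemma sqnormZ n (c : R) (u : 'rV[R]_n) : sqnorm (c *: u) = c ^+ 2 * sqnorm u.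
Proof. by rewrite !sqnormE mulr_sumr; apply: eq_bigr => j _; rewrite mxE; ring. Qed.

(* Pythagoras for the projection on a unit vector: the Cauchy-Schwarz defect
   |c|^2 - <a,c>^2 is the squared distance from c to its projection on a. *)
Lemma sqnorm_sub_proj n (a c : 'rV[R]_n) : sqnorm a = 1 ->
  sqnorm (c - dot a c *: a) = sqnorm c - dot a c ^+ 2.
Proof.
move=> a1; have := dotE a c; set t := dot a c => tE.
have -> : sqnorm (c - t *: a)
    = sqnorm c - 2 * t * (\sum_j a 0 j * c 0 j) + t ^+ 2 * sqnorm a.
  rewrite !sqnormE !mulr_sumr -sumrB -big_split /=.
  by apply: eq_bigr => j _; rewrite !mxE; ring.
by rewrite -tE a1; ring.
Qed.

Lemma sum_sq_dev n (a : 'rV[R]_n) : (0 < n)%N -> sqnorm a = 1 ->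
  \sum_i (a 0 i ^+ 2 - n%:R^-1) ^+ 2 = \sum_i a 0 i ^+ 4 - n%:R^-1.
Proof.
move=> n_gt0 a1.
have -> : \sum_i (a 0 i ^+ 2 - n%:R^-1) ^+ 2
    = \sum_i a 0 i ^+ 4 - 2 * n%:R^-1 * sqnorm a + \sum_(i < n) n%:R^-1 ^+ 2.
  rewrite sqnormE !mulr_sumr -sumrB -big_split /=.
  by apply: eq_bigr => i _; ring.
rewrite a1 sumr_const card_ord -mulr_natr; field.
by rewrite pnatr_eq0 -lt0n.
Qed.

Lemma quad_sum n (I : finType) (g : I -> R) (z : I -> 'rV[R]_n) (x y : 'rV[R]_n) :
  (x *m (\sum_k g k *: ((z k)^T *m z k)) *m y^T) 0 0
  = \sum_k g k * (dot x (z k) * dot y (z k)).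
Proof.
rewrite mulmx_sumr mulmx_suml summxE; apply: eq_bigr => k _.
rewrite -scalemxAr -scalemxAl mxE; congr (_ * _).
rewrite (mulmxA x) -(mulmxA (x *m (z k)^T)) mxE big_ord1; congr (_ * _).
by rewrite -/(dot y (z k)) dotC.
Qed.

Lemma mulmx_trE m p n (A : 'M[R]_(m, n)) (B : 'M[R]_(p, n)) i j :
  (A *m B^T) i j = dot (row i A) (row j B).
Proof. by rewrite dotE mxE; apply: eq_bigr => k _; rewrite !mxE. Qed.

(* A B^T = 0 forces B = 0: the diagonal entries are the squared row norms. *)
Lemma mulmx_tr_eq0 m n (B : 'M[R]_(m, n)) : B *m B^T = 0 -> B = 0.
Proof.
move=> BBt0; apply/row_matrixP => i; rewrite row0; apply: sqnorm_eq0.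
by rewrite -[sqnorm _]/(dot _ _) -mulmx_trE BBt0 mxE.
Qed.

Lemma sum_row_outer m n (A : 'M[R]_(m, n)) :
  \sum_i (row i A)^T *m row i A = A^T *m A.
Proof.
apply/matrixP => p q; rewrite summxE mxE; apply: eq_bigr => i _.
by rewrite !mxE big_ord1 !mxE.
Qed.

End RowVectors.

Section KroneckerProducts.
Variable R : rcfType.

Lemma sum_mxvec_index m n (f : 'I_(m * n) -> R) :
  \sum_k f k = \sum_i \sum_j f (mxvec_index i j).
Proof.
rewrite pair_big /= (reindex (uncurry (@mxvec_index m n))) //=.
  by apply: eq_bigr => -[i j].
exact: curry_mxvec_bij.
Qed.

Lemma kronvE N r (a : 'rV[R]_N) (b : 'rV[R]_r) i p :
  kronv a b 0 (mxvec_index i p) = a 0 i * b 0 p.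
Proof. by rewrite /kronv mxvecE !mxE big_ord1 !mxE. Qed.

Lemma kronvZ N r (c d : R) (a : 'rV[R]_N) (b : 'rV[R]_r) :
  kronv (c *: a) (d *: b) = (c * d) *: kronv a b.
Proof.
apply/rowP => k; case/mxvec_indexP: k => i p.
by rewrite mxE !kronvE !mxE; ring.
Qed.

Lemma sqnorm_kronv N r (a : 'rV[R]_N) (b : 'rV[R]_r) :
  sqnorm (kronv a b) = sqnorm a * sqnorm b.
Proof.
rewrite !sqnormE sum_mxvec_index mulr_suml; apply: eq_bigr => i _.
by rewrite mulr_sumr; apply: eq_bigr => p _; rewrite kronvE; ring.
Qed.

Lemma dot_mxvec_kronv N r (X : 'M[R]_(N, r)) (a : 'rV[R]_N) (b : 'rV[R]_r) :
  dot (mxvec X) (kronv a b) = (a *m X *m b^T) 0 0.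
Proof.
rewrite dotE sum_mxvec_index mxE; under [RHS]eq_bigr do rewrite mxE mulr_suml.
rewrite exchange_big /=; apply: eq_bigr => p _.
apply: eq_bigr => i _.
by rewrite mxvecE kronvE !mxE; ring.
Qed.

Definition kron_mix N r (I : finType) (w : I -> R)
    (a : I -> 'rV[R]_N) (b : I -> 'rV[R]_r) : 'M[R]_(N * r) :=
  \sum_k w k *: ((kronv (a k) (b k))^T *m kronv (a k) (b k)).

Lemma blk_kron_mix N r (I : finType) (w : I -> R)
    (a : I -> 'rV[R]_N) (b : I -> 'rV[R]_r) i j :
  blk (kron_mix w a b) i j
  = \sum_k (w k * (a k 0 i * a k 0 j)) *: ((b k)^T *m b k).
Proof.
apply/matrixP => p q; rewrite !mxE !summxE; apply: eq_bigr => k _.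
by rewrite !mxE !big_ord1 !mxE !kronvE; ring.
Qed.

Lemma mxtrace_blk N r (M : 'M[R]_(N * r)) : \tr M = \sum_i \tr (blk M i i).
Proof.
rewrite /mxtrace sum_mxvec_index; apply: eq_bigr => i _.
by apply: eq_bigr => p _; rewrite mxE.
Qed.

(* Normalization of a row vector (a fixed unit vector replaces 0). *)
Definition normalize n (n_gt0 : (0 < n)%N) (u : 'rV[R]_n) : 'rV[R]_n :=
  if u == 0 then delta_mx 0 (Ordinal n_gt0) else (Num.sqrt (sqnorm u))^-1 *: u.

Lemma sqnorm_normalize n (n_gt0 : (0 < n)%N) (u : 'rV[R]_n) :
  sqnorm (normalize n_gt0 u) = 1.
Proof.
rewrite /normalize; case: eqP => [_|u_neq0].
  by rewrite -[sqnorm _]/(dot _ _) dot_delta mxE !eqxx.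
rewrite sqnormZ exprVn sqr_sqrtr ?sqnorm_ge0 // mulVf //.
by apply/eqP => /sqnorm_eq0.
Qed.

Lemma normalizeK n (n_gt0 : (0 < n)%N) (u : 'rV[R]_n) :
  Num.sqrt (sqnorm u) *: normalize n_gt0 u = u.
Proof.
rewrite /normalize; case: eqP => [->|u_neq0].
  by rewrite -[sqnorm 0]/(dot 0 0) /dot mul0mx mxE sqrtr0 scale0r.
rewrite scalerA mulfV ?scale1r // sqrtr_eq0 -ltNge lt_def sqnorm_ge0 andbT.
by apply/eqP => /sqnorm_eq0.
Qed.

Lemma kronv_outer_normalize N r (N_gt0 : (0 < N)%N) (r_gt0 : (0 < r)%N)
    (a : 'rV[R]_N) (b : 'rV[R]_r) :
  (kronv a b)^T *m kronv a b
  = (sqnorm a * sqnorm b) *: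
    ((kronv (normalize N_gt0 a) (normalize r_gt0 b))^T
     *m kronv (normalize N_gt0 a) (normalize r_gt0 b)).
Proof.
rewrite -{1 2}(normalizeK N_gt0 a) -{1 2}(normalizeK r_gt0 b) kronvZ.
rewrite [_^T]linearZ /= -scalemxAl -scalemxAr scalerA.
by rewrite -expr2 exprMn !sqr_sqrtr ?sqnorm_ge0.
Qed.

Lemma separable_sum N r (N_gt0 : (0 < N)%N) (r_gt0 : (0 < r)%N) (I : finType)
    (w : I -> R) (a : I -> 'rV[R]_N) (b : I -> 'rV[R]_r) :
  (forall k, 0 <= w k) -> \tr (kron_mix w a b) = 1 -> separable (kron_mix w a b).
Proof.
move=> w_ge0 tr1; split=> //.
pose om k := w k * (sqnorm (a k) * sqnorm (b k)).
pose an k := normalize N_gt0 (a k); pose bn k := normalize r_gt0 (b k).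
have rhoE : kron_mix w a b
    = \sum_(k < #|{: I}|) om (enum_val k)
        *: ((kronv (an (enum_val k)) (bn (enum_val k)))^T
            *m kronv (an (enum_val k)) (bn (enum_val k))).
  rewrite /kron_mix (big_enum_val (fun k => w k *: _)); apply: eq_bigr => k _.
  by rewrite kronv_outer_normalize scalerA.
exists #|{: I}|, (om \o enum_val), (an \o enum_val), (bn \o enum_val).
split=> //= [k||k|k]; try exact: sqnorm_normalize.
- by rewrite /om; apply/mulr_ge0/mulr_ge0; rewrite ?sqnorm_ge0.
- rewrite -tr1 rhoE raddf_sum /=; apply: eq_bigr => k _.
  rewrite mxtraceZ mxtrace_mulC /mxtrace big_ord1.
  by rewrite -/(sqnorm _) sqnorm_kronv !sqnorm_normalize !mulr1.
Qed.

Lemma kron_mix_Bsep N r (N_gt0 : (0 < N)%N) (r_gt0 : (0 < r)%N) (I : finType)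
    (w : I -> R) (a : I -> 'rV[R]_N) (b : I -> 'rV[R]_r) :
  (forall k, 0 <= w k) -> (forall i, blk (kron_mix w a b) i i = 1%:M) ->
  Bsep (kron_mix w a b).
Proof.
move=> w_ge0 diag1.
have Nr_neq0 : ((N * r)%:R : R) != 0.
  by rewrite pnatr_eq0 muln_eq0 negb_or -!lt0n N_gt0 r_gt0.
split; first split.
- rewrite /kron_mix linear_sum /=; apply: eq_bigr => k _.
  by rewrite linearZ /= trmx_mul trmxK.
- move=> u; rewrite quad_sum; apply: sumr_ge0 => k _.
  by rewrite mulr_ge0 // -expr2 sqr_ge0.
- exact: diag1.
- move=> i j; rewrite blk_kron_mix linear_sum /=; apply: eq_bigr => k _.
  by rewrite linearZ /= trmx_mul trmxK.
have scaledE : ((N * r)%:R)^-1 *: kron_mix w a b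
    = kron_mix (fun k => ((N * r)%:R)^-1 * w k) a b.
  by rewrite /kron_mix scaler_sumr; apply: eq_bigr => k _; rewrite scalerA.
rewrite scaledE; apply: separable_sum => // [k|].
  by rewrite mulr_ge0 // invr_ge0 ler0n.
rewrite -scaledE mxtraceZ mxtrace_blk.
under eq_bigr do rewrite diag1 mxtrace1.
by rewrite sumr_const card_ord -[_ *+ N]mulr_natr -natrM [(r * N)%N]mulnC mulVf.
Qed.

Lemma Bsep_kron_mix N r (M : 'M[R]_(N * r)) : Bsep M ->
  exists m (w : 'I_m -> R) (a : 'I_m -> 'rV[R]_N) (b : 'I_m -> 'rV[R]_r),
    [/\ forall k, 0 <= w k, forall k, sqnorm (a k) = 1 & M = kron_mix w a b].
Proof.
case=> _ [tr1 [m [w [a [b [w_ge0 _ a1 _ rhoE]]]]]].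
have Nr_neq0 : ((N * r)%:R : R) != 0.
  apply/eqP => Nr0; move: tr1; rewrite Nr0 invr0 scale0r mxtrace0 => /eqP.
  by rewrite eq_sym oner_eq0.
exists m, (fun k => (N * r)%:R * w k), a, b; split=> // [k|].
  by rewrite mulr_ge0 ?ler0n.
rewrite /kron_mix; under eq_bigr do rewrite -scalerA.
by rewrite -scaler_sumr -rhoE scalerA mulfV ?scale1r.
Qed.

End KroneckerProducts.

Section RowSpaces.
Variable R : rcfType.

Lemma gram_row_free_unit m n (A : 'M[R]_(m, n)) : row_free A -> A *m A^T \in unitmx.
Proof.
move=> A_free; rewrite -row_free_unit -kermx_eq0; set K := kermx _.
have KAAt0 : K *m (A *m A^T) = 0 by exact: mulmx_ker.
have KA0 : K *m A = 0.
  by apply: mulmx_tr_eq0; rewrite trmx_mul mulmxA -(mulmxA K) KAAt0 mul0mx.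
have : (K <= kermx A)%MS by apply/sub_kermxP.
by rewrite -kermx_eq0 in A_free; rewrite (eqP A_free) submx0.
Qed.

Lemma row_space_projection m n (V : 'M[R]_(m, n)) :
  exists P : 'M[R]_n, [/\ P^T = P, P *m P = P, V *m P = V & (P <= V)%MS].
Proof.
pose C := row_base V.
have V_le_C : (V <= C)%MS by rewrite eq_row_base.
have C_le_V : (C <= V)%MS by rewrite eq_row_base.
have G_unit : C *m C^T \in unitmx := gram_row_free_unit (row_base_free V).
clearbody C; pose P := C^T *m invmx (C *m C^T) *m C.
have CP : C *m P = C by rewrite /P !mulmxA mulmxV // mul1mx.
exists P; split.
- by rewrite /P !trmx_mul trmxK trmx_inv trmx_mul trmxK mulmxA.
- by rewrite {1}/P -(mulmxA (C^T *m invmx (C *m C^T)) C P) CP.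
- by rewrite -{1}(mulmxKpV V_le_C) -(mulmxA (V *m pinvmx C) C P) CP mulmxKpV.
- exact: submx_trans (submxMl _ _) C_le_V.
Qed.

Lemma psd_decomp_range m n (I : finType) (A : 'M[R]_(m, n)) (w : I -> R)
    (z : I -> 'rV[R]_m) :
  (forall k, 0 <= w k) -> A *m A^T = \sum_k w k *: ((z k)^T *m z k) ->
  forall k, w k != 0 -> (z k <= A^T)%MS.
Proof.
move=> w_ge0 AAtE k wk_neq0; rewrite submxE; set K := cokermx A^T.
apply/eqP/rowP => l; rewrite [RHS]mxE -(dot_delta (z k *m K)) /dot -mulmxA.
pose e : 'rV[R]_m := delta_mx 0 l *m K^T.
have -> : K *m (delta_mx 0 l)^T = e^T by rewrite trmx_mul trmxK.
have eA0 : e *m A = 0.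
  by rewrite /e -mulmxA -[A in K^T *m A]trmxK -trmx_mul mulmx_coker trmx0 mulmx0.
have : (e *m (A *m A^T) *m e^T) 0 0 = 0 by rewrite mulmxA eA0 !mul0mx mxE.
rewrite AAtE quad_sum => /psumr_eq0P zero.
have /eqP := zero (fun j _ => mulr_ge0 (w_ge0 j) (sqr_ge0 _)) k isT.
by rewrite mulf_eq0 (negbTE wk_neq0) -expr2 sqrf_eq0 dotC => /eqP.
Qed.

End RowSpaces.

Section SignVectors.
Variable R : rcfType.

(* Sign of a real number, with the convention sign 0 = 1 of sign vectors. *)
Definition sign (x : R) : R := if 0 <= x then 1 else -1.

Lemma sign_abs x : x = sign x * `|x|.
Proof.
rewrite /sign; case: ifP => [x_ge0|/negbT]; first by rewrite ger0_norm ?mul1r.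
by rewrite -ltNge => x_lt0; rewrite ltr0_norm // mulN1r opprK.
Qed.

Lemma sign_mul (n x y : R) : n * x ^+ 2 = 1 -> n * y ^+ 2 = 1 ->
  sign x * sign y = n * x * y.
Proof.
move=> nx1 ny1.
have n_neq0 : n != 0.
  by apply/eqP => n0; move: nx1; rewrite n0 mul0r => /eqP; rewrite eq_sym oner_eq0.
have abs_xy : `|x| = `|y|.
  apply/eqP; rewrite -(@eqrXn2 _ 2) ?normr_ge0 // !real_normK ?num_real //.
  by rewrite -(inj_eq (mulfI n_neq0)) nx1 ny1.
rewrite {2}(sign_abs x) {2}(sign_abs y) -abs_xy.
transitivity (sign x * sign y * (n * `|x| ^+ 2)); last by ring.
by rewrite real_normK ?num_real // nx1 mulr1.
Qed.

Lemma sgvec_sqr N (s : {ffun 'I_N -> bool}) i : sgvec R s 0 i ^+ 2 = 1.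
Proof. by rewrite mxE; case: (s i); rewrite ?sqrrN expr1n. Qed.

Lemma sqnorm_sgvec N (s : {ffun 'I_N -> bool}) : sqnorm (sgvec R s) = N%:R.
Proof.
rewrite sqnormE (eq_bigr (fun _ => 1)) => [|i _]; last exact: sgvec_sqr.
by rewrite sumr_const card_ord.
Qed.

Lemma cut_polytope_mix N (I : finType) (lam : I -> R)
    (s : I -> {ffun 'I_N -> bool}) (X : 'M[R]_N) :
  (forall k, 0 <= lam k) -> \sum_k lam k = 1 ->
  X = \sum_k lam k *: ((sgvec R (s k))^T *m sgvec R (s k)) -> cut_polytope X.
Proof.
move=> lam_ge0 lam1 XE; exists [ffun t => \sum_(k | s k == t) lam k].
split; [|split].
- by move=> t; rewrite ffunE; apply: sumr_ge0.
- rewrite -lam1 (partition_big s predT) //=.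
  by apply: eq_bigr => t _; rewrite ffunE.
- rewrite XE (partition_big s predT) //=; apply: eq_bigr => t _.
  by rewrite ffunE scaler_suml; apply: eq_bigr => k /eqP <-.
Qed.

Lemma cut_polytope_diag N (X : 'M[R]_N) : cut_polytope X -> forall i, X i i = 1.
Proof.
case=> w [_ [w1 ->]] i; rewrite summxE -w1; apply: eq_bigr => s _.
by rewrite mxE [_ i i]mxE big_ord1 !mxE; case: (s i); rewrite ?mulrNN !mulr1.
Qed.

End SignVectors.

(* Let P = L V be the orthogonal projection on the row space of
   V, u_s = x_s L^T and q_1, ..., q_r the rows of Q = I - P.  The witness
     sum_s w_s (x_s (x) u_s)^T (x_s (x) u_s)
       + sum_(s,p) w_s (x_s (x) q_p)^T (x_s (x) q_p)
   has diagonal blocks P + Q = I, and v = vec V is orthogonal to every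
   x_s (x) q_p (as V Q = 0) while <v, x_s (x) u_s> = N. *)
Section CutToBsep.
Variables (R : rcfType) (N r : nat) (V : 'M[R]_(N, r)).
Variable w : {ffun {ffun 'I_N -> bool} -> R}.
Hypotheses (w_ge0 : forall s, 0 <= w s) (w_sum1 : \sum_s w s = 1).
Hypothesis gramV : gram V = \sum_s w s *: ((sgvec R s)^T *m sgvec R s).
Variable P : 'M[R]_r.
Hypotheses (P_sym : P^T = P) (P_idem : P *m P = P).
Hypothesis VP : V *m P = V.
Variable L : 'M[R]_(r, N).
Hypothesis LV : L *m V = P.

Let u s := sgvec R s *m L^T.

(* The u_s carry exactly the projection P: sum_s w_s u_s^T u_s = L V V^T L^T. *)
Lemma sum_outer_u : \sum_s w s *: ((u s)^T *m u s) = P.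
Proof.
transitivity (L *m gram V *m L^T).
  rewrite gramV mulmx_sumr mulmx_suml; apply: eq_bigr => s _.
  by rewrite -scalemxAr -scalemxAl /u trmx_mul trmxK !mulmxA.
by rewrite /gram !mulmxA LV -mulmxA -trmx_mul LV P_sym P_idem.
Qed.

(* Every sign vector of the decomposition is in the column space of V, so
   that x_s V u_s^T = |x_s|^2 = N. *)
Lemma u_value s : w s != 0 -> (sgvec R s *m V *m (u s)^T) 0 0 = N%:R.
Proof.
move=> ws_neq0; have x_le_Vt := psd_decomp_range w_ge0 gramV ws_neq0.
set y := sgvec R s *m pinvmx V^T.
have xtE : (sgvec R s)^T = V *m y^T by rewrite -{1}(mulmxKpV x_le_Vt) trmx_mul trmxK.
rewrite /u trmx_mul trmxK xtE !mulmxA -(mulmxA (sgvec R s *m V) L V) LV.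
by rewrite -(mulmxA (sgvec R s) V P) VP -mulmxA -xtE -(sqnorm_sgvec R s).
Qed.

Let Q : 'M[R]_r := 1%:M - P.
Let VQ : V *m Q = 0. Proof. by rewrite mulmxBr mulmx1 VP subrr. Qed.
Let Q_sym : Q^T = Q. Proof. by rewrite linearB /= trmx1 P_sym. Qed.
Let Q_idem : Q^T *m Q = Q.
Proof. by rewrite Q_sym mulmxBr mulmx1 !mulmxBl mul1mx P_idem subrr subr0. Qed.

Let T := ({ffun 'I_N -> bool} + {ffun 'I_N -> bool} * 'I_r)%type.
Let tsign (t : T) := match t with inl s => s | inr sp => sp.1 end.
Let tvec (t : T) : 'rV[R]_r := match t with inl s => u s | inr sp => row sp.2 Q end.

Definition cut_witness : 'M[R]_(N * r) :=
  kron_mix (fun t => w (tsign t)) (fun t => sgvec R (tsign t)) tvec.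

Lemma cut_witness_diag i : blk cut_witness i i = 1%:M.
Proof.
rewrite blk_kron_mix big_sumType /=.
under eq_bigr do rewrite -expr2 sgvec_sqr mulr1.
under [X in _ + X]eq_bigr do rewrite -expr2 sgvec_sqr mulr1.
rewrite sum_outer_u.
rewrite -(pair_big predT predT (fun s p => w s *: ((row p Q)^T *m row p Q))) /=.
under eq_bigr do rewrite -scaler_sumr sum_row_outer Q_idem.
by rewrite -scaler_suml w_sum1 scale1r addrC subrK.
Qed.

Lemma cut_witness_value :
  (mxvec V *m cut_witness *m (mxvec V)^T) 0 0 = (N ^ 2)%:R.
Proof.
rewrite quad_sum big_sumType /=.
rewrite [X in _ + X]big1 ?addr0 => [|[s p] _]; last first.
  rewrite dot_mxvec_kronv /= tr_row Q_sym colE mulmxA -(mulmxA (sgvec R s)) VQ.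
  by rewrite mulmx0 mul0mx mxE mul0r mulr0.
rewrite (eq_bigr (fun s => w s * N%:R ^+ 2)) => [|s _].
  by rewrite -mulr_suml w_sum1 mul1r natrX.
have [->|ws_neq0] := eqVneq (w s) 0; first by rewrite !mul0r.
by rewrite dot_mxvec_kronv u_value // expr2.
Qed.

End CutToBsep.

Lemma cut_polytope_Bsep (R : rcfType) (N r : nat) (N_gt0 : (0 < N)%N)
    (r_gt0 : (0 < r)%N) (V : 'M[R]_(N, r)) :
  cut_polytope (gram V) ->
  exists M : 'M[R]_(N * r),
    Bsep M /\ (mxvec V *m M *m (mxvec V)^T) 0 0 = (N ^ 2)%:R.
Proof.
case=> w [w_ge0 [w_sum1 gramV]].
have [P [P_sym P_idem VP P_le_V]] := row_space_projection V.
have LV : P *m pinvmx V *m V = P := mulmxKpV P_le_V.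
exists (cut_witness w P (P *m pinvmx V)); split.
  by apply: kron_mix_Bsep => // i; exact: (cut_witness_diag w_sum1 gramV).
exact: (cut_witness_value w_ge0 w_sum1 gramV).
Qed.

(* With c_k = (<v_i, b_k>)_i and t_k = <a_k, c_k> = <v, a_k (x) b_k>:
   - summing the diagonal blocks gives  sum_k w_k b_k^T b_k = N I;
   - hence  sum_k w_k |c_k|^2 = N^2 = sum_k w_k t_k^2, so Cauchy-Schwarz is
     tight: c_k = t_k a_k whenever w_k <> 0;
   - with mu_k = w_k t_k^2 this gives  N gram V = sum_k mu_k a_k^T a_k  and
     sum_k mu_k a_ki^4 = |v_i|^2, which forces a_ki^2 = 1/N when mu_k <> 0;
   - so each a_k is a sign vector over sqrt N and gram V is a convex
     combination of sign-vector outer products. *)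
Section BsepToCut.
Variables (R : rcfType) (N r m : nat) (V : 'M[R]_(N, r)).
Variables (w : 'I_m -> R) (a : 'I_m -> 'rV[R]_N) (b : 'I_m -> 'rV[R]_r).
Hypotheses (N_gt0 : (0 < N)%N) (w_ge0 : forall k, 0 <= w k).
Hypothesis a_unit : forall k, sqnorm (a k) = 1.
Hypothesis mix_diag : forall i, blk (kron_mix w a b) i i = 1%:M.
Hypothesis rows_sum : \sum_i sqnorm (row i V) = N%:R.
Hypothesis mix_value :
  (mxvec V *m kron_mix w a b *m (mxvec V)^T) 0 0 = (N ^ 2)%:R.

Let c k := b k *m V^T.
Let t k := dot (a k) (c k).

Let cE k i : c k 0 i = dot (row i V) (b k).
Proof. by rewrite mulmx_trE row_id dotC. Qed.

Let gram_diag i : gram V i i = sqnorm (row i V).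
Proof. exact: mulmx_trE. Qed.

(* Summing the diagonal blocks, the b_k form a tight frame. *)
Lemma mix_frame : \sum_k w k *: ((b k)^T *m b k) = N%:R *: 1%:M.
Proof.
transitivity (\sum_(i < N) blk (kron_mix w a b) i i); last first.
  by under eq_bigr do rewrite mix_diag; rewrite sumr_const card_ord scaler_nat.
under [RHS]eq_bigr do rewrite blk_kron_mix.
rewrite exchange_big /=; apply: eq_bigr => k _.
rewrite -scaler_suml -mulr_sumr -{1}[w k]mulr1 -(a_unit k) sqnormE.
by under [in RHS]eq_bigr do rewrite -expr2.
Qed.

Lemma weighted_t : \sum_k w k * t k ^+ 2 = (N ^ 2)%:R.
Proof.
rewrite -mix_value quad_sum; apply: eq_bigr => k _.
by rewrite dot_mxvec_kronv /t /dot /c trmx_mul trmxK mulmxA expr2.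
Qed.

(* The frame identity tested against the rows of V. *)
Lemma weighted_c i j : \sum_k w k * (c k 0 i * c k 0 j) = N%:R * gram V i j.
Proof.
have := congr1 (fun B => (row i V *m B *m (row j V)^T) 0 0) mix_frame.
rewrite /= quad_sum -scalemxAr -scalemxAl mxE mulmx1 -/(dot _ _) -mulmx_trE => <-.
by apply: eq_bigr => k _; rewrite !cE.
Qed.

(* Equality in Cauchy-Schwarz. *)
Lemma c_aligned k : w k != 0 -> c k = t k *: a k.
Proof.
move=> wk_neq0.
have defect0 : \sum_k w k * sqnorm (c k - t k *: a k) = 0.
  under eq_bigr do rewrite sqnorm_sub_proj // mulrBr.
  rewrite sumrB weighted_t.
  under eq_bigr do rewrite sqnormE mulr_sumr.
  rewrite exchange_big /=.
  under eq_bigr do (under eq_bigr do rewrite expr2; rewrite weighted_c gram_diag).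
  by rewrite -mulr_sumr rows_sum natrX expr2 subrr.
have ge0 j : true -> 0 <= w j * sqnorm (c j - t j *: a j).
  by move=> _; rewrite mulr_ge0 ?sqnorm_ge0.
have /eqP := psumr_eq0P ge0 defect0 isT (i := k).
rewrite mulf_eq0 (negbTE wk_neq0) /= => /eqP /sqnorm_eq0 /eqP.
by rewrite subr_eq0 => /eqP.
Qed.

Let mu k := w k * t k ^+ 2.

Let mu_ge0 k : 0 <= mu k.
Proof. by rewrite mulr_ge0 ?sqr_ge0. Qed.

Let mu_sum : \sum_k mu k = N%:R ^+ 2.
Proof. by rewrite weighted_t natrX. Qed.

Let c_supp k i : w k != 0 -> c k 0 i = t k * a k 0 i.
Proof. by move=> wk_neq0; rewrite c_aligned // mxE. Qed.

Lemma mu_gram i j : N%:R * gram V i j = \sum_k mu k * (a k 0 i * a k 0 j).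
Proof.
rewrite -weighted_c; apply: eq_bigr => k _.
rewrite /mu; have [->|wk_neq0] := eqVneq (w k) 0; first by rewrite !mul0r.
by rewrite !c_supp //; ring.
Qed.

(* The i-th diagonal block tested against v_i. *)
Lemma mu_fourth i : \sum_k mu k * a k 0 i ^+ 4 = sqnorm (row i V).
Proof.
have := congr1 (fun B => (row i V *m B *m (row i V)^T) 0 0) (mix_diag i).
rewrite /= mulmx1 blk_kron_mix quad_sum -/(sqnorm _) => <-.
apply: eq_bigr => k _; rewrite -!cE.
rewrite /mu; have [->|wk_neq0] := eqVneq (w k) 0; first by rewrite !mul0r.
by rewrite !c_supp //; ring.
Qed.

Lemma a_flat k i : mu k != 0 -> N%:R * a k 0 i ^+ 2 = 1.
Proof.
move=> muk_neq0; have N_neq0 : (N%:R : R) != 0 by rewrite pnatr_eq0 -lt0n.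
have dev0 : \sum_k mu k * \sum_i (a k 0 i ^+ 2 - N%:R^-1) ^+ 2 = 0.
  under eq_bigr do rewrite sum_sq_dev // mulrBr mulr_sumr.
  rewrite sumrB exchange_big /= -mulr_suml mu_sum.
  under eq_bigr do rewrite mu_fourth.
  by rewrite rows_sum expr2 -mulrA mulfV // mulr1 subrr.
have ge0 j : true -> 0 <= mu j * \sum_i (a j 0 i ^+ 2 - N%:R^-1) ^+ 2.
  by move=> _; apply/mulr_ge0/sumr_ge0 => [|l _]; [exact: mu_ge0 | exact: sqr_ge0].
have /eqP := psumr_eq0P ge0 dev0 isT (i := k).
rewrite mulf_eq0 (negbTE muk_neq0) /= => /eqP sum0.
have /eqP := psumr_eq0P (fun l _ => sqr_ge0 _) sum0 isT (i := i).
by rewrite sqrf_eq0 subr_eq0 => /eqP ->; rewrite mulfV.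
Qed.

(* gram V = sum_k (mu_k / N^2) x_k^T x_k with x_k the sign vector of a_k. *)
Lemma Bsep_mix_cut : cut_polytope (gram V).
Proof.
have N_neq0 : (N%:R : R) != 0 by rewrite pnatr_eq0 -lt0n.
apply: (@cut_polytope_mix _ _ _ (fun k => mu k / N%:R ^+ 2)
                                (fun k => [ffun i => 0 <= a k 0 i])).
- by move=> k; apply: divr_ge0 (mu_ge0 k) (sqr_ge0 _).
- by rewrite -mulr_suml mu_sum mulfV ?expf_neq0.
apply/matrixP => i j; rewrite summxE.
rewrite -[LHS]mul1r -(mulVf N_neq0) -mulrA mu_gram mulr_sumr.
apply: eq_bigr => k _; rewrite !mxE big_ord1 !mxE !ffunE.
have [->|muk_neq0] := eqVneq (mu k) 0; first by rewrite !(mul0r, mulr0).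
rewrite -[if _ then _ else _]/(sign _) -[if _ then _ else _]/(sign _).
by rewrite (sign_mul (a_flat i muk_neq0) (a_flat j muk_neq0)); field.
Qed.

End BsepToCut.

Theorem proposition10 (R : rcfType) (N r : nat) (hN : (0 < N)%N)
    (V : 'M[R]_(N, r)) :
  cut_polytope (gram V) <->
  (\sum_(i < N) sqnorm (row i V) = N%:R /\
   exists M : 'M[R]_(N * r),
     Bsep M /\ (mxvec V *m M *m (mxvec V)^T) 0 0 = (N ^ 2)%:R).
Proof.
split=> [cutV | [rows_sum [M [M_Bsep M_value]]]].
  have rows1 i : sqnorm (row i V) = 1.
    by rewrite -[sqnorm _]/(dot _ _) -mulmx_trE cut_polytope_diag.
  have r_gt0 : (0 < r)%N.
    case: (posnP r) => // r0; have := rows1 (Ordinal hN).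
    rewrite sqnormE big1 => [/eqP|j _]; first by rewrite eq_sym oner_eq0.
    by have := ltn_ord j; rewrite [X in (_ < X)%N]r0.
  split; last exact: cut_polytope_Bsep.
  by rewrite (eq_bigr _ (fun i _ => rows1 i)) sumr_const card_ord.
have [m [w [a [b [w_ge0 a_unit ME]]]]] := Bsep_kron_mix M_Bsep.
case: M_Bsep => -[_ _ M_diag _] _; rewrite ME in M_diag M_value.
exact: Bsep_mix_cut.
Qed.
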